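(* Assume Martin's Axiom. Then there exists a very mad family, and every very mad family has cardinality $2^{\aleph_0}$.
   Context: Functions $f \in \mathbb{N}^{\mathbb{N}}$ are identified with their graphs. Two functions $g_0,g_1 \in \mathbb{N}^{\mathbb{N}}$ are almost disjoint if $\{n : g_0(n)=g_1(n)\}$ is finite; $\mathcal{A}\subseteq\mathbb{N}^{\mathbb{N}}$ is an almost disjoint family of functions if any two distinct members are almost disjoint. A function $f$ is finitely covered by $\mathcal{A}$ if there are $g_0,\dots,g_n \in \mathcal{A}$ with $\{k : f(k)\notin\{g_0(k),\dots,g_n(k)\}\}$ finite; a family $F$ is finitely covered by $\mathcal{A}$ if some member of $F$ is. A family $\mathcal{A} \subseteq \mathbb{N}^{\mathbb{N}}$ is a very mad family if it is an almost disjoint family of functions and for every $F \subseteq \mathbb{N}^{\mathbb{N}}$ with $|F| < |\mathcal{A}|$ that is not finitely covered by $\mathcal{A}$, there is $g \in \mathcal{A}$ such that $\{n : f(n)=g(n)\}$ is infinite for every $f \in F$. *)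

From Stdlib Require Import Arith List.
Import ListNotations.

Definition injective {A B : Type} (f : A -> B) : Prop :=
  forall x y, f x = f y -> x = y.

Definition card_le (A B : Type) : Prop := exists f : A -> B, injective f.
Definition card_lt (A B : Type) : Prop := card_le A B /\ ~ card_le B A.
Definition card_eq (A B : Type) : Prop :=
  exists f : A -> B, injective f /\ (forall y, exists x, f x = y).

Definition countable (A : Type) : Prop := card_le A nat.

Definition compatible {P : Type} (le : P -> P -> Prop) (p q : P) : Prop :=
  exists r, le r p /\ le r q.

Definition antichain {P : Type} (le : P -> P -> Prop) (X : P -> Prop) : Prop :=
  forall p q, X p -> X q -> p <> q -> ~ compatible le p q.

Definition ccc {P : Type} (le : P -> P -> Prop) : Prop :=
  forall X : P -> Prop, antichain le X -> countable {p : P | X p}.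

Definition dense {P : Type} (le : P -> P -> Prop) (D : P -> Prop) : Prop :=
  forall p, exists d, D d /\ le d p.

Definition is_filter {P : Type} (le : P -> P -> Prop) (G : P -> Prop) : Prop :=
  (exists p, G p) /\
  (forall p q, G p -> le p q -> G q) /\
  (forall p q, G p -> G q -> exists r, G r /\ le r p /\ le r q).

Definition partial_order {P : Type} (le : P -> P -> Prop) : Prop :=
  (forall p, le p p) /\
  (forall p q r, le p q -> le q r -> le p r) /\
  (forall p q, le p q -> le q p -> p = q).

Definition MartinsAxiom : Prop :=
  forall (P : Type) (le : P -> P -> Prop),
    partial_order le -> inhabited P -> ccc le ->
    forall (I : Type) (D : I -> P -> Prop),
      card_lt I (nat -> bool) ->
      (forall i, dense le (D i)) ->
      exists G : P -> Prop, is_filter le G /\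
        (forall i, exists p, G p /\ D i p).

Definition almost_disjoint (g0 g1 : nat -> nat) : Prop :=
  exists N, forall n, N <= n -> g0 n <> g1 n.

Definition ad_family (A : (nat -> nat) -> Prop) : Prop :=
  forall g0 g1, A g0 -> A g1 -> g0 <> g1 -> almost_disjoint g0 g1.

Definition fin_covered_fun (A : (nat -> nat) -> Prop) (f : nat -> nat) : Prop :=
  exists l : list (nat -> nat),
    (forall g, In g l -> A g) /\
    exists N, forall k, N <= k -> exists g, In g l /\ f k = g k.

Definition fin_covered (F A : (nat -> nat) -> Prop) : Prop :=
  exists f, F f /\ fin_covered_fun A f.

Definition inf_agree (f g : nat -> nat) : Prop :=
  forall N, exists n, N <= n /\ f n = g n.

(* Very mad family (mad families are by convention infinite) *)
Definition very_mad (A : (nat -> nat) -> Prop) : Prop :=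
  ad_family A /\
  card_le nat {g : nat -> nat | A g} /\
  forall F : (nat -> nat) -> Prop,
    card_lt {f : nat -> nat | F f} {g : nat -> nat | A g} ->
    ~ fin_covered F A ->
    exists g, A g /\ forall f, F f -> inf_agree f g.

(* After some cardinal arithmetic below the continuum ("small" sets), the
   engine of the proof is one forcing argument (generic_function): if A and F
   are small families of functions nat -> nat and no member of F is finitely
   covered by A, MA yields g almost disjoint from all of A and agreeing
   infinitely often with every member of F.  Two consequences follow: the
   Baire space is not a small union of small sets (no_small_cover), so small
   sets are bounded in a well-order of the Baire space with small initial
   segments (small_segment_order).  Along such an order a transfinite
   recursion builds a very mad family.  Conversely a small very mad family A
   is refuted by a function almost disjoint from all of A, and the
   Schroeder-Bernstein theorem gives |A| = 2^aleph0. *)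

From Pilot Require Import Defs.
From Stdlib Require Import Arith List Lia Cantor Inverse_Image.
From Stdlib Require Import Classical ClassicalEpsilon FunctionalExtensionality PropExtensionality.
From mathcomp Require ssreflect ssrbool eqtype boolp classical_sets cardinality wochoice.
Import ListNotations.

Notation Baire := (nat -> nat).
Notation Cont := (nat -> bool).

Lemma sig_ext {A : Type} (P : A -> Prop) (x y : {a | P a}) :
  proj1_sig x = proj1_sig y -> x = y.
Proof.
  destruct x as [x px], y as [y py]; simpl; intro E; subst.
  f_equal; apply proof_irrelevance.
Qed.

Lemma pred_ext {A : Type} (P Q : A -> Prop) : (forall a, P a <-> Q a) -> P = Q.
Proof. intro H; extensionality a; apply propositional_extensionality; auto. Qed.

Module SetTheory.
Import ssreflect ssrbool eqtype boolp classical_sets cardinality wochoice.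
Local Open Scope classical_set_scope.
Local Open Scope card_scope.

(* A strict well-order: well-founded and connected (transitivity follows,
   since a cycle would have no least element). *)
Theorem well_ordering (T : Type) : exists lt : T -> T -> Prop,
  well_founded lt /\ (forall x y, x <> y -> lt x y \/ lt y x).
Proof.
have [R woR] := well_ordering_principle {classic T}.
have woT : wo_chain R predT by apply: withinW.
have totR : total R by move=> x y; apply: (wo_chainW woT).
have antiR : antisymmetric R by move=> x y; apply: (wo_chain_antisymmetric woT).
have minP (A : {pred {classic T}}) a :
    a \in A -> exists2 z, z \in A & forall w, w \in A -> R z w.
  by move=> Aa; have [z [[Az lbz] _]] := woR A (ex_intro _ a Aa); exists z.
exists (fun x y => R x y /\ x <> y); split.
- move=> a; apply: contrapT => nAcc.
  have [z /asboolP nAz lbz] := minP [pred w | `[< ~ Acc _ w >]] a (asboolT nAcc).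
  apply: nAz; constructor => y [Ryz nyz]; apply: contrapT => nAy.
  by apply: nyz; apply: antiR; rewrite Ryz lbz //; apply/asboolP.
- move=> x y nxy; have /orP[Rxy|Ryx] := totR x y; [left|right]; split=> //.
  by move=> eyx; apply: nxy.
Qed.

Theorem schroeder_bernstein (A B : Type) :
  Defs.card_le A B -> Defs.card_le B A -> Defs.card_eq A B.
Proof.
move=> [f injf] [g injg].
elim/Ppointed: A => A in f g injf injg *.
  by exists f; split=> [x|y]; [case: (no x) | case: (no (g y))].
elim/Ppointed: B => B in f g injf injg *.
  by case: (no (f point)).
have le_AB : [set: A] #<= [set: B] by apply/pcard_injP; exists f => x y _ _; apply: injf.
have le_BA : [set: B] #<= [set: A] by apply/pcard_injP; exists g => x y _ _; apply: injg.
have [h [_ injh surjh]] := card_set_bijP (Cantor_Bernstein le_AB le_BA).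
exists h; split=> [x y|y]; first by apply: injh; rewrite ?inE.
by have [x _ <-] := surjh y I; exists x.
Qed.
End SetTheory.

Lemma card_le_trans A B C : card_le A B -> card_le B C -> card_le A C.
Proof. intros [f hf] [g hg]; exists (fun x => g (f x)); intros x y e; auto. Qed.

Lemma card_le_sig {A} (P : A -> Prop) : card_le {a | P a} A.
Proof. exists (@proj1_sig _ _); intros x y; apply sig_ext. Qed.

Lemma card_le_sub {A} (P Q : A -> Prop) :
  (forall a, P a -> Q a) -> card_le {a | P a} {a | Q a}.
Proof.
  intro H. exists (fun x => exist _ (proj1_sig x) (H _ (proj2_sig x))).
  intros x y e; apply sig_ext; apply (f_equal (@proj1_sig _ _)) in e; exact e.
Qed.

Lemma two_reals : ((fun _ => true) : Cont) <> (fun _ => false).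
Proof. intro e; apply (f_equal (fun h => h 0)) in e; discriminate. Qed.

Definition seq_code (F : nat -> Cont) : Cont :=
  fun k => let (i, j) := Cantor.of_nat k in F i j.

Lemma seq_code_inj : injective seq_code.
Proof.
  intros F G e; extensionality i; extensionality j.
  assert (H := f_equal (fun h => h (Cantor.to_nat (i, j))) e); cbv beta in H.
  unfold seq_code in H; rewrite Cantor.cancel_of_to in H; exact H.
Qed.

Definition pair_code (a b : Cont) : Cont :=
  seq_code (fun i => match i with 0 => a | S _ => b end).

Lemma pair_code_inj a b a' b' : pair_code a b = pair_code a' b' -> a = a' /\ b = b'.
Proof.
  intro e; apply seq_code_inj in e.
  split; [exact (f_equal (fun F => F 0) e) | exact (f_equal (fun F => F 1) e)].
Qed.

Definition graph_code (f : Baire) : Cont :=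
  fun k => let (i, j) := Cantor.of_nat k in Nat.eqb (f i) j.

Lemma card_le_baire_cont : card_le Baire Cont.
Proof.
  exists graph_code; intros f g e; extensionality i.
  assert (H := f_equal (fun h => h (Cantor.to_nat (i, f i))) e); cbv beta in H.
  unfold graph_code in H; rewrite Cantor.cancel_of_to, Nat.eqb_refl in H.
  symmetry in H; apply Nat.eqb_eq in H; auto.
Qed.

Lemma card_le_cont_baire : card_le Cont Baire.
Proof.
  exists (fun (r : Cont) n => if r n then 1 else 0); intros x y e; extensionality n.
  apply (f_equal (fun h => h n)) in e; destruct (x n), (y n); auto; discriminate.
Qed.

Fixpoint list_code (l : list nat) : nat :=
  match l with [] => 0 | x :: l => S (Cantor.to_nat (x, list_code l)) end.

Lemma list_code_inj : injective list_code.
Proof.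
  intro l; induction l as [|x l IH]; intros [|y l'] e; cbn [list_code] in e;
    try discriminate; auto.
  apply Nat.succ_inj, (f_equal Cantor.of_nat) in e; rewrite !Cantor.cancel_of_to in e.
  injection e as e1 e2; subst; f_equal; auto.
Qed.

(* Sets of size strictly less than the continuum, and their closure
   properties: subsets, images, finite sums, and products with nat (the
   latter is the inequality cf(2^aleph0) > aleph0, proved by diagonalisation). *)

Definition small (Y : Type) : Prop := card_lt Y Cont.

Lemma small_le Y Z : card_le Y Z -> small Z -> small Y.
Proof.
  intros h [h1 h2]; split; [eapply card_le_trans; eauto|].
  intro h3; apply h2; eapply card_le_trans; eauto.
Qed.

Lemma small_sub {A} (P Q : A -> Prop) :
  (forall a, P a -> Q a) -> small {a | Q a} -> small {a | P a}.
Proof. intro h; apply small_le, card_le_sub, h. Qed.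

Lemma small_range {I B} (r : I -> B) : small I -> small {b | exists i, b = r i}.
Proof.
  apply small_le.
  assert (H : forall b : {b | exists i, b = r i}, exists i, proj1_sig b = r i)
    by (intros [b hb]; exact hb).
  destruct (choice _ H) as [c Hc]. exists c; intros a b e.
  apply sig_ext; rewrite Hc, Hc, e; auto.
Qed.

Lemma small_unit : small unit.
Proof.
  split; [exists (fun _ _ => true); intros [] []; auto|].
  intros [f hf]; apply two_reals, hf.
  destruct (f (fun _ => true)), (f (fun _ => false)); auto.
Qed.

Lemma small_empty {A} : small {a : A | False}.
Proof.
  apply (small_le _ unit); [|exact small_unit].
  exists (fun _ => tt); intros [x []].
Qed.

Lemma small_sum Y Z : small Y -> small Z -> small (Y + Z).
Proof.
  intros [[fy hy] nY] [[fz hz] nZ]; split.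
  - exists (fun v => match v with
                     | inl y => pair_code (fun _ => true) (fy y)
                     | inr z => pair_code (fun _ => false) (fz z) end).
    intros [y|y] [z|z] e; apply pair_code_inj in e; destruct e as [e1 e2];
      solve [exfalso; apply two_reals; congruence | f_equal; auto].
  - intros [phi hphi].
    destruct (classic (exists a, forall b, exists y, phi (pair_code a b) = inl y))
      as [[a Ha]|Hn].
    + (* a whole fibre {pair_code a b | b} is sent into Y *)
      apply nY; destruct (choice _ Ha) as [g Hg]; exists g; intros b b' e.
      assert (E : phi (pair_code a b) = phi (pair_code a b')) by (rewrite Hg, Hg, e; auto).
      apply hphi, pair_code_inj in E; tauto.
    + (* every fibre meets the preimage of Z, which yields Cont <= Z *)
      apply nZ.
      assert (H : forall a, exists bz : Cont * Z, phi (pair_code a (fst bz)) = inr (snd bz)).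
      { intro a; apply NNPP; intro C; apply Hn; exists a; intro b.
        destruct (phi (pair_code a b)) as [y|z] eqn:E; [eauto|].
        exfalso; apply C; exists (b, z); auto. }
      destruct (choice _ H) as [g Hg]; exists (fun a => snd (g a)); intros a a' e.
      assert (E : phi (pair_code a (fst (g a))) = phi (pair_code a' (fst (g a'))))
        by (rewrite Hg, Hg, e; auto).
      apply hphi, pair_code_inj in E; tauto.
Qed.

Lemma small_prod_nat Y : small Y -> small (Y * nat).
Proof.
  intros [[fy hy] nY]; split.
  - exists (fun p => pair_code (fy (fst p)) (fun k => Nat.eqb k (snd p))).
    intros [a m] [b n] e; apply pair_code_inj in e; destruct e as [e1 e2]; simpl in *.
    apply hy in e1; subst; apply (f_equal (fun h => h m)) in e2.
    rewrite Nat.eqb_refl in e2; symmetry in e2; apply Nat.eqb_eq in e2; subst; auto.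
  - intros [phi hphi]; apply nY.
    set (Th := fun x => phi (seq_code x)).
    (* some column k is free: every real occurs in column k of a sequence
       whose image has second component k *)
    assert (Hk : exists k, forall r, exists x, x k = r /\ snd (Th x) = k).
    { apply NNPP; intro C.
      assert (H : forall k, exists c, forall x, x k = c -> snd (Th x) <> k).
      { intro k; apply NNPP; intro C2; apply C; exists k; intro r.
        apply NNPP; intro C3; apply C2; exists r; intros x e1 e2; apply C3; eauto. }
      destruct (choice _ H) as [c Hc]; apply (Hc (snd (Th c)) c); auto. }
    destruct Hk as [k Hk]; destruct (choice _ Hk) as [g Hg].
    exists (fun r => fst (Th (g r))); intros r r' e.
    assert (E : Th (g r) = Th (g r')).
    { destruct (Hg r) as [_ h1], (Hg r') as [_ h2].
      destruct (Th (g r)), (Th (g r')); simpl in *; subst; auto. }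
    apply hphi, seq_code_inj in E; destruct (Hg r) as [h1 _], (Hg r') as [h2 _].
    rewrite <- h1, <- h2, E; auto.
Qed.

Lemma ad_not_covered (A : Baire -> Prop) f :
  (forall a, A a -> almost_disjoint f a) -> ~ fin_covered_fun A f.
Proof.
  intros adf [l [hl [N HN]]].
  assert (U : exists M, forall n, M <= n -> forall g, In g l -> f n <> g n).
  { clear HN; induction l as [|g0 l IH].
    - exists 0; intros n _ g [].
    - destruct IH as [M HM]; [intros; apply hl; right; auto|].
      destruct (adf g0 (hl g0 (or_introl eq_refl))) as [M0 HM0].
      exists (M + M0); intros n hn g [<-|ig]; [apply HM0|apply HM]; auto; lia. }
  destruct U as [M HM]; destruct (HN (N + M)) as [g [ig eg]]; [lia|].
  apply (HM (N + M) ltac:(lia) g ig eg).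
Qed.

(* The forcing argument.  Fix a small family Ap of functions to avoid and a
   small family Fp of functions to meet infinitely often. *)
Section Diagonalization.
Variable Ap : Baire -> Prop.

Definition finite_in_Ap (E : Baire -> Prop) : Prop :=
  exists l, (forall g, E g <-> In g l) /\ (forall g, In g l -> Ap g).

(* A condition is a finite stem of the generic function together with a
   finite set of members of Ap which every later value must avoid. *)
Record cond : Type :=
  Cond { stem : list nat; promise : Baire -> Prop; promise_fin : finite_in_Ap promise }.

Lemma cond_ext p q : stem p = stem q -> promise p = promise q -> p = q.
Proof. destruct p, q; simpl; intros; subst; f_equal; apply proof_irrelevance. Qed.

Definition extends (p q : cond) : Prop :=
  (exists t, stem p = stem q ++ t) /\ (forall h, promise q h -> promise p h) /\
  (forall n h, length (stem q) <= n < length (stem p) -> promise q h ->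
     nth n (stem p) 0 <> h n).

Lemma extends_po : partial_order extends.
Proof.
  split; [|split].
  - intro p; split; [exists []; rewrite app_nil_r; auto|split; auto]; intros; lia.
  - intros p q r [[t1 e1] [i1 d1]] [[t2 e2] [i2 d2]]; split; [|split].
    + exists (t2 ++ t1); rewrite e1, e2, app_assoc; auto.
    + auto.
    + intros n h hn hh; destruct (Nat.lt_ge_cases n (length (stem q))) as [c|c].
      * rewrite e1, app_nth1 by auto; apply d2; auto; lia.
      * apply d1; auto; lia.
  - intros p q [[t1 e1] [i1 _]] [[t2 e2] [i2 _]]; apply cond_ext.
    + assert (length t1 = 0).
      { apply (f_equal (@length nat)) in e1; apply (f_equal (@length nat)) in e2.
        rewrite length_app in e1, e2; lia. }
      destruct t1; [|discriminate]; rewrite e1, app_nil_r; auto.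
    + apply pred_ext; split; auto.
Qed.

(* Conditions with the same stem are compatible (join their promises), and
   there are only countably many stems: the order is ccc. *)
Lemma extends_ccc : ccc extends.
Proof.
  intros X HX; exists (fun p => list_code (stem (proj1_sig p))).
  intros [p xp] [q xq] e; simpl in e; apply list_code_inj in e; apply sig_ext; simpl.
  apply NNPP; intro ne; apply (HX p q xp xq ne).
  destruct (promise_fin p) as [lp [hp1 hp2]], (promise_fin q) as [lq [hq1 hq2]].
  assert (V : finite_in_Ap (fun h => promise p h \/ promise q h)).
  { exists (lp ++ lq); split.
    - intro g; rewrite in_app_iff, hp1, hq1; tauto.
    - intros g; rewrite in_app_iff; intros [h|h]; auto. }
  exists (Cond (stem p) _ V); split; split; simpl.
  - exists []; rewrite app_nil_r; auto.
  - split; auto; intros; lia.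
  - exists []; rewrite app_nil_r, e; auto.
  - split; auto; intros; rewrite e in *; lia.
Qed.

Definition empty_cond : cond.
Proof. refine (Cond [] (fun _ => False) _); exists []; split; simpl; tauto. Defined.

Definition avoid (l : list Baire) (i : nat) : nat :=
  S (fold_right (fun g s => g i + s) 0 l).

Lemma avoid_spec l g i : In g l -> avoid l i <> g i.
Proof.
  intro hg; enough (g i < avoid l i) by lia; revert hg.
  unfold avoid; induction l as [|h l IH]; simpl; [tauto|].
  intros [->|H]; [lia|specialize (IH H); lia].
Qed.

Definition pad (s : list nat) (l : list Baire) (m v : nat) : list nat :=
  s ++ map (avoid l) (seq (length s) (m - length s)) ++ [v].

Lemma pad_length s l m v : length s <= m -> length (pad s l m v) = S m.
Proof. intro; unfold pad; rewrite !length_app, length_map, length_seq; simpl; lia. Qed.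

Lemma pad_nth_avoid s l m v n : length s <= n < m -> nth n (pad s l m v) 0 = avoid l n.
Proof.
  intro hn; unfold pad; rewrite app_nth2 by lia.
  rewrite app_nth1 by (rewrite length_map, length_seq; lia).
  rewrite nth_indep with (d' := avoid l 0) by (rewrite length_map, length_seq; lia).
  rewrite map_nth, seq_nth by lia; f_equal; lia.
Qed.

Lemma pad_nth_last s l m v : length s <= m -> nth m (pad s l m v) 0 = v.
Proof.
  intro hm; unfold pad; rewrite app_nth2 by lia.
  rewrite app_nth2 by (rewrite length_map, length_seq; lia).
  rewrite length_map, length_seq, Nat.sub_diag; reflexivity.
Qed.

Definition extend (p : cond) (l : list Baire) (m v : nat) : cond :=
  Cond (pad (stem p) l m v) (promise p) (promise_fin p).

Lemma extend_extends p l m v :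
  (forall h, promise p h -> In h l) -> length (stem p) <= m ->
  (forall h, In h l -> v <> h m) -> extends (extend p l m v) p.
Proof.
  intros hl hm hv; split; [|split]; simpl; auto.
  - unfold pad; eexists; reflexivity.
  - intros n h hn hh; rewrite pad_length in hn by lia.
    destruct (Nat.eq_dec n m) as [->|ne].
    + rewrite pad_nth_last by lia; apply hv, hl; auto.
    + rewrite pad_nth_avoid by lia; apply avoid_spec, hl; auto.
Qed.

Lemma promise_listed p : exists l, forall h, promise p h -> In h l.
Proof. destruct (promise_fin p) as [l [hl _]]; exists l; intro h; apply hl. Qed.

Lemma dense_length k : dense extends (fun p => k <= length (stem p)).
Proof.
  intro p; destruct (promise_listed p) as [l hl].
  set (m := k + length (stem p)).
  exists (extend p l m (avoid l m)); split.
  - simpl; rewrite pad_length; lia.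
  - apply extend_extends; auto; [lia|]; intros h hh; apply avoid_spec; auto.
Qed.

Lemma dense_promise a : Ap a -> dense extends (fun p => promise p a).
Proof.
  intros ha p; destruct (promise_fin p) as [l [hl1 hl2]].
  assert (V : finite_in_Ap (fun h => a = h \/ promise p h)).
  { exists (a :: l); split.
    - intro g; simpl; rewrite hl1; tauto.
    - intros g [<-|h]; auto. }
  exists (Cond (stem p) _ V); simpl; split; auto; split; [|split]; simpl.
  - exists []; rewrite app_nil_r; auto.
  - auto.
  - intros; lia.
Qed.

(* Since f is not finitely covered, beyond any point it takes a value missed
   by the finitely many promised functions; put that value into the stem. *)
Lemma dense_agree f k : ~ fin_covered_fun Ap f ->
  dense extends (fun p => exists n, k <= n < length (stem p) /\ nth n (stem p) 0 = f n).
Proof.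
  intros nc p; destruct (promise_fin p) as [l [hl1 hl2]].
  assert (Hm : exists m, k + length (stem p) <= m /\ forall h, In h l -> f m <> h m).
  { apply NNPP; intro C; apply nc; exists l; split; [auto|].
    exists (k + length (stem p)); intros m hm; apply NNPP; intro C2; apply C.
    exists m; split; auto; intros h hh e; apply C2; exists h; auto. }
  destruct Hm as [m [hm1 hm2]].
  exists (extend p l m (f m)); split.
  - exists m; simpl; rewrite pad_length, pad_nth_last by lia; split; [lia|auto].
  - apply extend_extends; [apply hl1|lia|auto].
Qed.

Variable Fp : Baire -> Prop.

(* The requirements the generic filter must meet: keep each a in Ap avoided,
   agree with each f in Fp beyond every k, and have a stem of every length. *)
Definition requirement : Type := (({a | Ap a} + {f | Fp f}) + unit) * nat.

Definition meets (i : requirement) (p : cond) : Prop :=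
  match i with
  | (inl (inl a), _) => promise p (proj1_sig a)
  | (inl (inr f), k) => exists n, k <= n < length (stem p) /\ nth n (stem p) 0 = proj1_sig f n
  | (inr _, k) => k <= length (stem p)
  end.

Hypothesis uncovered : forall f, Fp f -> ~ fin_covered_fun Ap f.

Lemma meets_dense i : dense extends (meets i).
Proof.
  destruct i as [[[[a ha]|[f hf]]|[]] k]; simpl.
  - apply dense_promise; auto.
  - apply dense_agree; auto.
  - apply dense_length.
Qed.

Hypotheses (small_Ap : small {a | Ap a}) (small_Fp : small {f | Fp f}).

Theorem generic_function : MartinsAxiom ->
  exists g, (forall a, Ap a -> almost_disjoint g a) /\ (forall f, Fp f -> inf_agree f g).
Proof.
  intro MA.
  assert (sI : small requirement)
    by (apply small_prod_nat, small_sum; [apply small_sum; auto|apply small_unit]).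
  destruct (MA cond extends extends_po (inhabits empty_cond) extends_ccc
                requirement meets sI meets_dense) as [G [[_ [_ Gdir]] GD]].
  assert (Gstem : forall p q n, G p -> G q -> n < length (stem p) -> n < length (stem q) ->
                    nth n (stem p) 0 = nth n (stem q) 0).
  { intros p q n gp gq h1 h2; destruct (Gdir p q gp gq) as [r [_ [[[t1 e1] _] [[t2 e2] _]]]].
    rewrite <- (app_nth1 (stem p) t1), <- (app_nth1 (stem q) t2), <- e1, <- e2 by auto; auto. }
  assert (Glong : forall n, exists p, G p /\ n < length (stem p)).
  { intro n; destruct (GD (inr tt, S n)) as [p [gp dp]]; exists p; auto. }
  destruct (choice _ Glong) as [P HP].
  exists (fun n => nth n (stem (P n)) 0); split.
  - intros a ha; destruct (GD (inl (inl (exist _ a ha)), 0)) as [p [gp dp]]; simpl in dp.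
    exists (length (stem p)); intros n hn; destruct (HP n) as [gq hq].
    destruct (Gdir p (P n) gp gq) as [r [gr [[[t1 e1] [_ d1]] [[t2 e2] _]]]].
    assert (Lr : n < length (stem r)) by (rewrite e2, length_app; lia).
    rewrite (Gstem (P n) r n gq gr hq Lr); apply d1; auto.
  - intros f hf N; destruct (GD (inl (inr (exist _ f hf)), N)) as [p [gp [n [hn e]]]].
    simpl in e; exists n; split; [lia|]; rewrite <- e.
    destruct (HP n) as [gq hq]; apply (Gstem p (P n) n gp gq); lia.
Qed.
End Diagonalization.

Lemma escape (A : Baire -> Prop) : MartinsAxiom -> small {a | A a} ->
  exists g, forall a, A a -> almost_disjoint g a.
Proof.
  intros MA sA.
  destruct (generic_function A (fun _ => False) (fun _ h => False_ind _ h) sA small_empty MA)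
    as [g [hg _]]; eauto.
Qed.

Lemma catch (F : Baire -> Prop) : MartinsAxiom -> small {f | F f} ->
  exists g, forall f, F f -> inf_agree f g.
Proof.
  intros MA sF.
  assert (nc : forall f, F f -> ~ fin_covered_fun (fun _ => False) f)
    by (intros f _; apply ad_not_covered; tauto).
  destruct (generic_function (fun _ => False) F nc small_empty sF MA) as [g [_ hg]]; eauto.
Qed.

(* Under MA the Baire space is not a union of fewer than continuum many sets
   each of size less than continuum: escape each K i by some r i, then catch
   all the r i by one z; z cannot lie in any K i. *)
Lemma no_small_cover (I : Type) (K : I -> Baire -> Prop) : MartinsAxiom ->
  small I -> (forall i, small {h | K i h}) -> exists z, forall i, ~ K i z.
Proof.
  intros MA sI sK.
  assert (Hr : forall i, exists r, forall h, K i h -> almost_disjoint r h)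
    by (intro i; apply escape; auto).
  destruct (choice _ Hr) as [r hr].
  destruct (catch (fun h => exists i, h = r i) MA (small_range r sI)) as [z hz].
  exists z; intros i Kz; destruct (hr i z Kz) as [N HN].
  destruct (hz (r i) (ex_intro _ i eq_refl) N) as [n [hn e]]; apply (HN n hn e).
Qed.

Lemma wf_minimal {A} (r : A -> A -> Prop) (P : A -> Prop) y0 :
  well_founded r -> P y0 -> exists m, P m /\ forall w, r w m -> ~ P w.
Proof.
  intros wf py; apply NNPP; intro C.
  assert (forall a, ~ P a).
  { intro a; induction (wf a) as [a _ IH]; intro pa; apply C; exists a; split; auto. }
  eauto.
Qed.

(* The Baire space carries a well-order all of whose initial segments are
   small (order type 2^aleph0): inside any well-order, the points with small
   initial segment are as many as the continuum, and the order pulled back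
   along an injection of the Baire space into them has small segments. *)
Lemma small_segment_order : exists lt : Baire -> Baire -> Prop,
  well_founded lt /\ (forall x y, x <> y -> lt x y \/ lt y x) /\
  (forall x, small {y | lt y x}).
Proof.
  destruct (SetTheory.well_ordering Baire) as [lt0 [wf0 to0]].
  set (B := fun x => small {y | lt0 y x}).
  assert (cRB : card_le Cont {x | B x}).
  { destruct (classic (forall x, B x)) as [all|nall].
    - eapply card_le_trans; [apply card_le_cont_baire|].
      exists (fun x => exist B x (all x)); intros x y e.
      apply (f_equal (@proj1_sig _ _)) in e; auto.
    - (* the segment below the least point outside B lies inside B *)
      apply not_all_ex_not in nall; destruct nall as [x0 nB].
      destruct (wf_minimal lt0 (fun x => ~ B x) x0 wf0 nB) as [m [hm1 hm2]].
      apply NNPP; intro C; apply hm1; apply (small_sub _ B).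
      + intros y hy; apply NNPP, hm2; auto.
      + split; [|exact C]; eapply card_le_trans; [apply card_le_sig|apply card_le_baire_cont]. }
  destruct (card_le_trans _ _ _ card_le_baire_cont cRB) as [beta binj].
  exists (fun x y => lt0 (proj1_sig (beta x)) (proj1_sig (beta y))); split; [|split].
  - apply (wf_inverse_image Baire Baire lt0 (fun x => proj1_sig (beta x))); auto.
  - intros x y ne; apply to0; intro e; apply ne, binj, sig_ext; auto.
  - intro x; refine (small_le _ _ _ (proj2_sig (beta x))).
    exists (fun y : {y | lt0 (proj1_sig (beta y)) (proj1_sig (beta x))} =>
              exist (fun z => lt0 z (proj1_sig (beta x)))
                    (proj1_sig (beta (proj1_sig y))) (proj2_sig y)).
    intros y y' e; apply (f_equal (@proj1_sig _ _)) in e; simpl in e.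
    apply sig_ext, binj, sig_ext; auto.
Qed.

Section Construction.
Hypothesis MA : MartinsAxiom.
Variable lt : Baire -> Baire -> Prop.
Hypotheses (wf : well_founded lt) (to : forall x y, x <> y -> lt x y \/ lt y x)
  (seg : forall x, small {y | lt y x}).

(* Every small set of functions is bounded in the order, since the
   segments {y | y <= f}, f in F, do not cover the Baire space. *)
Lemma small_bounded (F : Baire -> Prop) : small {f | F f} -> exists x, forall f, F f -> lt f x.
Proof.
  intro sF.
  set (K := fun (f : {f | F f}) y => lt y (proj1_sig f) \/ y = proj1_sig f).
  assert (sK : forall f, small {y | K f y}).
  { intros [f hf]; apply (small_le _ ({y | lt y f} + unit)); [|apply small_sum, small_unit; auto].
    exists (fun y : {y | K (exist _ f hf) y} =>
              match excluded_middle_informative (lt (proj1_sig y) f) with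
              | left h => inl (exist _ (proj1_sig y) h)
              | right _ => inr tt end).
    intros [y ky] [y' ky']; simpl.
    destruct (excluded_middle_informative (lt y f)), (excluded_middle_informative (lt y' f));
      intro e; try discriminate; apply sig_ext; simpl.
    - injection e; auto.
    - destruct ky, ky'; simpl in *; tauto || congruence. }
  destruct (no_small_cover _ K MA sF sK) as [z hz]; exists z; intros f hf.
  destruct (classic (z = f)) as [e|ne]; [destruct (hz (exist _ f hf)); right; auto|].
  destruct (to z f ne) as [h|h]; [destruct (hz (exist _ f hf)); left|]; auto.
Qed.

Definition next_member (A F : Baire -> Prop) : Baire :=
  epsilon (inhabits (fun _ => 0))
    (fun g => (forall a, A a -> almost_disjoint g a) /\ (forall f, F f -> inf_agree f g)).

Definition stage (x : Baire) (rec : forall y, lt y x -> Baire) : Baire :=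
  next_member (fun h => exists y (H : lt y x), h = rec y H)
    (fun f => lt f x /\ ~ fin_covered_fun (fun h => exists y (H : lt y x), h = rec y H) f).

Definition member : Baire -> Baire := Fix wf (fun _ => Baire) stage.

Definition earlier (x : Baire) : Baire -> Prop := fun h => exists y (_ : lt y x), h = member y.
Definition pending (x : Baire) : Baire -> Prop :=
  fun f => lt f x /\ ~ fin_covered_fun (earlier x) f.

Lemma member_eq x : member x = next_member (earlier x) (pending x).
Proof.
  unfold member; rewrite Fix_eq; [reflexivity|].
  intros x' f g H; replace g with f; [reflexivity|].
  extensionality y; extensionality p; auto.
Qed.

Lemma member_spec x : (forall a, earlier x a -> almost_disjoint (member x) a) /\
                      (forall f, pending x f -> inf_agree f (member x)).
Proof.
  rewrite member_eq; unfold next_member; apply epsilon_spec, generic_function; auto.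
  - intros f [_ h]; auto.
  - apply (small_sub _ (fun h => exists y : {y | lt y x}, h = member (proj1_sig y))).
    + intros h [y [hy e]]; exists (exist _ y hy); auto.
    + apply small_range, seg.
  - apply (small_sub _ (fun f => lt f x)); [intros f h; apply h|apply seg].
Qed.

Lemma member_ad x y : lt y x -> almost_disjoint (member x) (member y).
Proof. intro h; apply (proj1 (member_spec x)); exists y, h; auto. Qed.

Lemma member_inj x y : member x = member y -> x = y.
Proof.
  intro e; apply NNPP; intro ne.
  destruct (to x y ne) as [h|h]; [destruct (member_ad y x h) as [N HN]|
                                  destruct (member_ad x y h) as [N HN]];
    apply (HN N (le_n _)); rewrite e; reflexivity.
Qed.

Definition family : Baire -> Prop := fun h => exists x, h = member x.

Lemma family_very_mad : very_mad family.
Proof.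
  split; [|split].
  - intros g0 g1 [x ->] [y ->] ne.
    assert (nxy : x <> y) by (intros ->; auto).
    destruct (to x y nxy) as [h|h]; [|apply member_ad; auto].
    destruct (member_ad y x h) as [N HN]; exists N; intros n hn e; apply (HN n hn); auto.
  - exists (fun n => exist family (member (fun _ => n)) (ex_intro _ _ eq_refl)).
    intros n m e; apply (f_equal (@proj1_sig _ _)), member_inj in e; simpl in e.
    exact (f_equal (fun h => h 0) e).
  - (* a small F not finitely covered is handled at any stage bounding it *)
    intros F [cl ncl] nfc.
    assert (sF : small {f | F f}).
    { assert (cA : card_le {g | family g} Cont)
        by (eapply card_le_trans; [apply card_le_sig|apply card_le_baire_cont]).
      split; [eapply card_le_trans; eauto|]; intro h; apply ncl; eapply card_le_trans; eauto. }
    destruct (small_bounded F sF) as [x hx]; exists (member x); split; [exists x; auto|].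
    intros f hf; apply (proj2 (member_spec x)); split; auto.
    intros [l [hl cov]]; apply nfc; exists f; split; auto; exists l; split; auto.
    intros g hg; destruct (hl g hg) as [y [hy e]]; exists y; auto.
Qed.
End Construction.

(* A very mad family is never small: a function almost disjoint from all its
   members would, as a one-element family, witness a failure of very madness. *)
Lemma very_mad_card (A : Baire -> Prop) : MartinsAxiom -> very_mad A ->
  card_eq {g | A g} Cont.
Proof.
  intros MA [_ [[e he] vm]].
  assert (le_A : card_le {g | A g} Cont)
    by (eapply card_le_trans; [apply card_le_sig|apply card_le_baire_cont]).
  apply SetTheory.schroeder_bernstein; auto.
  apply NNPP; intro nle.
  destruct (escape A MA (conj le_A nle)) as [f hf].
  destruct (vm (fun h => h = f)) as [g [hg agree]].
  - split.
    + exists (fun _ => e 0); intros a b _; apply sig_ext.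
      rewrite (proj2_sig a), (proj2_sig b); auto.
    + intros [phi hphi].
      assert (E : e 0 = e 1).
      { apply hphi, sig_ext; rewrite (proj2_sig (phi (e 0))), (proj2_sig (phi (e 1))); auto. }
      apply he in E; discriminate.
  - intros [f0 [-> nc]]; exact (ad_not_covered A f hf nc).
  - destruct (hf g hg) as [N HN]; destruct (agree f eq_refl N) as [n [hn e']].
    apply (HN n hn); auto.
Qed.

Theorem mainTheorem2 :
  MartinsAxiom ->
  (exists A : (nat -> nat) -> Prop, very_mad A) /\
  (forall A : (nat -> nat) -> Prop, very_mad A ->
     card_eq {g : nat -> nat | A g} (nat -> bool)).
Proof.
  intro MA; split.
  - destruct small_segment_order as [lt [wf [to seg]]].
    exists (family lt wf); apply family_very_mad; auto.
  - intros A; apply very_mad_card; auto.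
Qed.
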